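(* Consider an open chain of $M$ sites, each site $m$ carrying one spinless fermion mode (operators $c_m, c_m^\dagger$ with $\{c_m,c_{m'}^\dagger\}=\delta_{m,m'}$) and one spin-$1/2$. Let $\gamma_m, J_m$ be real numbers with $\gamma_m\neq 0$, and for $1\le m\le M$ define $$\hat h_m^{(L)} = -\gamma_{m-1}c_{m-1}^\dagger c_m + J_{m-1}c_{m-1}^\dagger c_m\sigma_m^-,\qquad \hat h_m^{(R)} = -\gamma_m c_{m+1}^\dagger c_m + J_m c_{m+1}^\dagger c_m \sigma_{m+1}^+,$$ with $\hat h_1^{(L)}=\hat h_M^{(R)}=0$. Fix $Q$ with $1\le Q\le M-2$. Let $|\xi\rangle$ be a state with exactly $Q$ fermions, of the form $|\xi\rangle = c_{f_Q}^\dagger\cdots c_{f_1}^\dagger|\Omega\rangle\otimes|s_1\rangle\otimes\cdots\otimes|s_M\rangle$ with $f_1<\dots<f_Q$, and suppose there is $q\in\{1,\dots,Q\}$ with $f_q\le M-2$ such that sites $f_q+1$ and $f_q+2$ are unoccupied. Then there exist spin states $|s'_{f_q+1}\rangle, |s'_{f_q+2}\rangle$ such that the state $|\xi'\rangle$, obtained from $|\xi\rangle$ by replacing $c_{f_q}^\dagger$ by $c_{f_q+2}^\dagger$ (all other fermion positions unchanged) and replacing $|s_{f_q+1}\rangle,|s_{f_q+2}\rangle$ by $|s'_{f_q+1}\rangle,|s'_{f_q+2}\rangle$ (all other spins unchanged), satisfies $$\hat h_{f_q}^{(R)}|\xi\rangle + \hat h_{f_q+2}^{(L)}|\xi'\rangle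 = 0.$$
   Context: $|\Omega\rangle$ is the fermion vacuum. For the spin on site $m$, $\sigma_m^{x,y,z}$ are Pauli matrices, $\sigma_m^{\pm}=\sigma_m^x\pm i\sigma_m^y$ (so $\sigma^+$ raises and $\sigma^-$ lowers $\sigma^z$). Fermion operators act on the fermionic factor and spin operators on the spin factors of the tensor product. *)

From HB Require Import structures.
From mathcomp Require Import all_boot all_order all_algebra.
Set Implicit Arguments. Unset Strict Implicit. Unset Printing Implicit Defensive.
Import Order.TTheory GRing.Theory Num.Theory.
Local Open Scope ring_scope.

Section Chain.
Variables (C : numClosedFieldType) (M : nat).

(* Basis configurations of the tensor product (Fock space of M fermion modes)
   (x) (C^2)^{(x) M}: a configuration is (occupation numbers, spins),
   with spin [true] = up (sigma^z = +1), [false] = down. Site m (1 <= m <= M)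
   corresponds to the ordinal m-1. *)
Definition cfg := ({ffun 'I_M -> bool} * {ffun 'I_M -> bool})%type.

Local Notation state := {ffun cfg -> C}.

Local Notation spin := {ffun bool -> C}.

Definition upd (b : bool) (i : 'I_M) (g : {ffun 'I_M -> bool}) : {ffun 'I_M -> bool} :=
  [ffun k => if k == i then b else g k].

(* Jordan-Wigner sign (-1)^{number of occupied modes before i}. *)
Definition jw (n : {ffun 'I_M -> bool}) (i : 'I_M) : C :=
  (-1) ^+ #|[set k : 'I_M | (k < i)%N && n k]|.

(* c_i^dagger |n> = jw n i |n + e_i> if n_i = 0, and 0 otherwise. *)
Definition cdagI (i : 'I_M) (v : state) : state :=
  [ffun y : cfg => if y.1 i then jw y.1 i * v (upd false i y.1, y.2) else 0].
(* c_i |n> = jw n i |n - e_i> if n_i = 1, and 0 otherwise. *)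
Definition cI (i : 'I_M) (v : state) : state :=
  [ffun y : cfg => if y.1 i then 0 else jw y.1 i * v (upd true i y.1, y.2)].
Definition sxI (i : 'I_M) (v : state) : state :=
  [ffun y : cfg => v (y.1, upd (~~ y.2 i) i y.2)].
Definition syI (i : 'I_M) (v : state) : state :=
  [ffun y : cfg => (if y.2 i then - 'i else 'i) * v (y.1, upd (~~ y.2 i) i y.2)].

Definition site (m : nat) : option 'I_M :=
  if m is m'.+1 then insub m' else None.

Definition on_site (F : 'I_M -> state -> state) (m : nat) (v : state) : state :=
  if site m is Some i then F i v else 0.

Definition cdag := on_site cdagI.
Definition c := on_site cI.
Definition sigx := on_site sxI.
Definition sigy := on_site syI.
Definition sc (k : C) (v : state) : state := [ffun y => k * v y].

Definition sigp (m : nat) (v : state) : state := sigx m v + sc 'i (sigy m v).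
Definition sigm (m : nat) (v : state) : state := sigx m v - sc 'i (sigy m v).

Variables (gam J : nat -> C).

Definition hL (m : nat) (v : state) : state :=
  if m == 1%N then 0 else
  sc (- gam m.-1) (cdag m.-1 (c m v)) + sc (J m.-1) (cdag m.-1 (c m (sigm m v))).

Definition hR (m : nat) (v : state) : state :=
  if m == M then 0 else
  sc (- gam m) (cdag m.+1 (c m v)) + sc (J m) (cdag m.+1 (c m (sigp m.+1 v))).

(* |Omega> (x) |s_1> (x) ... (x) |s_M> *)
Definition vac_spins (s : nat -> spin) : state :=
  [ffun y : cfg => if y.1 == [ffun => false] then \prod_(i < M) s i.+1 (y.2 i) else 0].

(* c^dag_{f_Q} ... c^dag_{f_1} |Omega> (x) |s_1> ... |s_M>, for f = [:: f_1; ...; f_Q] *)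
Definition xi (f : seq nat) (s : nat -> spin) : state :=
  foldl (fun v m => cdag m v) (vac_spins s) f.

End Chain.

Arguments hL {C} M gam J m v.
Arguments hR {C} M gam J m v.
Arguments xi {C} M f s.

From HB Require Import structures.
From mathcomp Require Import all_boot all_order all_algebra.
From mathcomp Require Import ring zify.
Import Order.TTheory GRing.Theory Num.Theory.
Set Implicit Arguments.
Unset Strict Implicit.
Unset Printing Implicit Defensive.
Local Open Scope ring_scope.

(* Both terms are product states with the moved fermion at the middle site
   f_q+1: h^R hops it there from f_q, h^L from f_q+2, and since the middle
   site is empty the two Jordan-Wigner signs agree.  h^R leaves the spin
   a := (-gam + J sigma^+) s_{f_q+1} at the middle site, which is the spin
   chosen there in xi'; h^L applies (-gam' + J' sigma^-) to the spin b at
   f_q+2.  As gam' <> 0 this operator is triangular and invertible, so b can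
   be chosen with (gam' - J' sigma^-) b = s_{f_q+2}: the two product states
   then differ only by the sign of one tensor factor and cancel. *)

Lemma sorted_ltn_cat_cons (s1 s2 : seq nat) x :
  sorted ltn (s1 ++ x :: s2) =
  [&& all (ltn^~ x) s1, all (ltn x) s2 & sorted ltn (s1 ++ s2)].
Proof.
rewrite !sorted_pairwise; try exact: ltn_trans.
rewrite !pairwise_cat pairwise_cons allrel_consr.
by case: (all _ s1); case: (all _ s2); rewrite ?andbF.
Qed.

Lemma sorted_ltn_shift2 (s1 s2 : seq nat) x :
  sorted ltn (s1 ++ x :: s2) -> x.+1 \notin s2 -> x.+2 \notin s2 ->
  sorted ltn (s1 ++ x.+2 :: s2).
Proof.
rewrite !sorted_ltn_cat_cons => /and3P[lt1 gt2 ->] x1 x2; rewrite andbT.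
apply/andP; split; apply/allP => y ys.
  by have /= := allP lt1 y ys; lia.
have /= := allP gt2 y ys.
have : y != x.+1 by apply: contraNneq x1 => <-.
have : y != x.+2 by apply: contraNneq x2 => <-.
lia.
Qed.

Lemma split_at_nth (T : Type) (x0 y : T) (f : seq T) n : (n < size f)%N ->
  exists s1 s2, f = s1 ++ nth x0 f n :: s2 /\ set_nth x0 f n y = s1 ++ y :: s2.
Proof.
move=> nf; exists (take n f), (drop n.+1 f).
by rewrite set_nthE nf -drop_nth // cat_take_drop.
Qed.

Section SingleSpin.
Variable C : numClosedFieldType.
Local Notation spin := {ffun bool -> C}.

(* sigma^+- = sigma^x +- i sigma^y on a single spin, hence the factor 2. *)
Definition spin_raise (v : spin) : spin := [ffun x => if x then 2 * v false else 0].
Definition spin_lower (v : spin) : spin := [ffun x => if x then 0 else 2 * v true].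

Lemma spin_raise_comb_neq0 (g y : C) (v : spin) :
  g != 0 -> v != 0 -> [ffun x => g * v x + y * spin_raise v x] != 0.
Proof.
move=> g0; apply: contraNneq => /ffunP comb0.
have v_false : v false = 0.
  by have /eqP := comb0 false; rewrite !ffunE mulr0 addr0 mulf_eq0 (negbTE g0) => /eqP.
have v_true : v true = 0.
  by have /eqP := comb0 true; rewrite !ffunE v_false !mulr0 addr0 mulf_eq0 (negbTE g0) => /eqP.
by apply/eqP/ffunP => -[]; rewrite ffunE.
Qed.

Lemma spin_lower_solve (g y : C) (u : spin) : g != 0 -> u != 0 ->
  exists2 b : spin, b != 0 & forall z, g * b z - y * spin_lower b z = u z.
Proof.
move=> g0 u0.
pose b : spin := [ffun z => if z then u true / g else (u false + y * (2 * (u true / g))) / g].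
have bE z : g * b z - y * spin_lower b z = u z by case: z; rewrite !ffunE /=; field.
exists b => //; apply: contraNneq u0 => b0; apply/eqP/ffunP => z.
by rewrite -bE b0 !ffunE; case: z; rewrite /= !mulr0 subr0.
Qed.

End SingleSpin.

Section ProductStates.
Variables (C : numClosedFieldType) (M : nat).
Local Notation state := {ffun cfg M -> C}.
Local Notation spin := {ffun bool -> C}.
Local Notation occupation := {ffun 'I_M -> bool}.

Definition occ (f : seq nat) : occupation := [ffun k : 'I_M => k.+1 \in f].

Definition set_spin (s : nat -> spin) (m : nat) (v : spin) : nat -> spin :=
  fun n => if n == m then v else s n.

Definition prod_state (P : occupation) (a : C) (s : nat -> spin) : state :=
  [ffun y : cfg M => if y.1 == P then a * \prod_(m < M) s m.+1 (y.2 m) else 0].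

Lemma on_siteS (F : 'I_M -> state -> state) (i : 'I_M) v : on_site F i.+1 v = F i v.
Proof. by rewrite /on_site /site valK. Qed.

Lemma updE b (i : 'I_M) (g : occupation) k : upd b i g k = if k == i then b else g k.
Proof. by rewrite ffunE. Qed.

Lemma updK b b' (i : 'I_M) (g : occupation) : upd b i (upd b' i g) = upd b i g.
Proof. by apply/ffunP => k; rewrite !updE; case: eqP. Qed.

Lemma upd_id b (i : 'I_M) (g : occupation) : g i = b -> upd b i g = g.
Proof. by move=> gi; apply/ffunP => k; rewrite updE; case: eqP => [->|]. Qed.

Lemma upd_eqE b (i : 'I_M) (P g : occupation) : P i = ~~ b ->
  (g i == b) && (upd (~~ b) i g == P) = (g == upd b i P).
Proof.
move=> Pi; apply/andP/eqP => [[/eqP gi /eqP <-] | ->].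
  by rewrite updK upd_id.
by rewrite updE eqxx updK upd_id.
Qed.

Lemma occ_cat_cons (s1 s2 : seq nat) (i : 'I_M) :
  occ (s1 ++ i.+1 :: s2) = upd true i (occ (s1 ++ s2)).
Proof.
apply/ffunP => k; rewrite !ffunE !mem_cat in_cons.
have -> : (k.+1 == i.+1) = (k == i) by [].
by case: (k == i); rewrite ?orbT.
Qed.

Lemma occ_rcons (f : seq nat) (i : 'I_M) : occ (rcons f i.+1) = upd true i (occ f).
Proof. by rewrite -cats1 occ_cat_cons cats0. Qed.

Lemma card_occ (f : seq nat) : uniq f -> all (fun m => 0 < m <= M)%N f ->
  #|[set k : 'I_M | k.+1 \in f]| = size f.
Proof.
move=> uf f_range; rewrite cardE -(size_map (fun k : 'I_M => k.+1)).
apply/perm_size/uniq_perm => //.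
  by rewrite map_inj_uniq ?enum_uniq // => a b [] /val_inj.
move=> x; apply/mapP/idP => [[k] | xf]; first by rewrite mem_enum inE => kf ->.
have /andP[x_gt0 x_le] := allP f_range x xf.
have x_lt : (x.-1 < M)%N by rewrite prednK.
by exists (Ordinal x_lt); rewrite ?mem_enum ?inE /= prednK.
Qed.

Lemma jw_occ (f : seq nat) (i : 'I_M) : uniq f -> all (fun m => 0 < m <= M)%N f ->
  all (ltn^~ i.+1) f -> jw C (occ f) i = (-1) ^+ size f.
Proof.
move=> uf f_range f_lt; rewrite /jw -(card_occ uf f_range); congr (_ ^+ _).
apply: eq_card => k; rewrite !inE ffunE.
by apply/andP/idP => [[]//| kf]; split=> //; have := allP f_lt _ kf.
Qed.

Lemma jw_upd b (i : 'I_M) (n : occupation) : jw C (upd b i n) i = jw C n i.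
Proof.
congr (_ ^+ _); apply: eq_card => k; rewrite !inE updE.
by case: eqP => [->|]; rewrite ?ltnn.
Qed.

Lemma jw_between (n : occupation) (i k : 'I_M) : (i <= k)%N ->
  (forall m : 'I_M, (i <= m < k)%N -> ~~ n m) -> jw C n k = jw C n i.
Proof.
move=> ik n0; congr (_ ^+ _); apply: eq_card => m; rewrite !inE.
case: (ltnP m i) => [mi | im]; first by rewrite (leq_trans mi ik).
case: (ltnP m k) => //= mk; apply/negbTE/n0; exact/andP.
Qed.

Lemma cdag_prod_state (i : 'I_M) (P : occupation) (a : C) (s : nat -> spin) : ~~ P i ->
  cdag i.+1 (prod_state P a s) = prod_state (upd true i P) (jw C P i * a) s.
Proof.
move=> Pi; apply/ffunP => y; rewrite /cdag on_siteS !ffunE /=.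
rewrite -(upd_eqE (b := true) y.1 (negbTE Pi)) /= eqb_id.
case: (y.1 i) => //=; case: eqP => [<- | _]; last by rewrite mulr0.
by rewrite jw_upd mulrA.
Qed.

Lemma c_prod_state (i : 'I_M) (P : occupation) (a : C) (s : nat -> spin) : P i ->
  c i.+1 (prod_state P a s) = prod_state (upd false i P) (jw C P i * a) s.
Proof.
move=> Pi; apply/ffunP => y; rewrite /c on_siteS !ffunE /=.
rewrite -(upd_eqE (b := false) y.1 Pi) /= eqbF_neg.
case: (y.1 i) => //=; case: eqP => [<- | _]; last by rewrite mulr0.
by rewrite jw_upd mulrA.
Qed.

Lemma hop_prod_state (i j : 'I_M) (P0 : occupation) (a : C) (s : nat -> spin) :
  ~~ P0 i -> ~~ P0 j ->
  cdag j.+1 (c i.+1 (prod_state (upd true i P0) a s)) =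
  prod_state (upd true j P0) (jw C P0 j * jw C P0 i * a) s.
Proof.
move=> P0i P0j; rewrite c_prod_state ?updE ?eqxx // updK upd_id ?(negbTE P0i) //.
by rewrite jw_upd cdag_prod_state // mulrA.
Qed.

Lemma prod_spinD1 (i : 'I_M) (s : nat -> spin) (g : occupation) :
  \prod_(m < M) s m.+1 (g m) = s i.+1 (g i) * \prod_(m < M | m != i) s m.+1 (g m).
Proof. exact: bigD1. Qed.

Lemma prod_spin_upd (i : 'I_M) (s : nat -> spin) (g : occupation) b :
  \prod_(m < M | m != i) s m.+1 (upd b i g m) = \prod_(m < M | m != i) s m.+1 (g m).
Proof. by apply: eq_bigr => m mi; rewrite updE (negbTE mi). Qed.

Lemma prod_set_spin (i : 'I_M) (s : nat -> spin) v (g : occupation) :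
  \prod_(m < M) set_spin s i.+1 v m.+1 (g m) =
  v (g i) * \prod_(m < M | m != i) s m.+1 (g m).
Proof.
rewrite (prod_spinD1 i) /set_spin eqxx; congr (_ * _).
by apply: eq_bigr => m mi; rewrite ifN.
Qed.

Lemma mulCiiA (x : C) : 'i * ('i * x) = - x.
Proof. by rewrite mulrA -expr2 sqrCi mulN1r. Qed.

Lemma sigp_prod_state (i : 'I_M) (P : occupation) (a : C) (s : nat -> spin) :
  sigp i.+1 (prod_state P a s) = prod_state P a (set_spin s i.+1 (spin_raise (s i.+1))).
Proof.
apply/ffunP => y; rewrite /sigp /sigx /sigy !on_siteS !ffunE /=.
case: eqP => _; last by rewrite !mulr0 addr0.
rewrite (prod_set_spin i s _ y.2) !(prod_spinD1 i) !prod_spin_upd !updE eqxx !ffunE.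
by case: (y.2 i); rewrite /= ?mulNr ?mulrN mulCiiA ?opprK; ring.
Qed.

Lemma sigm_prod_state (i : 'I_M) (P : occupation) (a : C) (s : nat -> spin) :
  sigm i.+1 (prod_state P a s) = prod_state P a (set_spin s i.+1 (spin_lower (s i.+1))).
Proof.
apply/ffunP => y; rewrite /sigm /sigx /sigy !on_siteS !ffunE /=.
case: eqP => _; last by rewrite !mulr0 subr0.
rewrite (prod_set_spin i s _ y.2) !(prod_spinD1 i) !prod_spin_upd !updE eqxx !ffunE.
by case: (y.2 i); rewrite /= ?mulNr ?mulrN mulCiiA ?opprK; ring.
Qed.

Lemma prod_state_comb (i : 'I_M) (P : occupation) (a x y : C) (s : nat -> spin) v :
  sc x (prod_state P a s) + sc y (prod_state P a (set_spin s i.+1 v)) =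
  prod_state P a (set_spin s i.+1 [ffun b => x * s i.+1 b + y * v b]).
Proof.
apply/ffunP => z; rewrite !ffunE; case: eqP => _; last by rewrite !mulr0 addr0.
by rewrite !(prod_set_spin i s _ z.2) (prod_spinD1 i) ffunE; ring.
Qed.

Lemma prod_state_opp (i : 'I_M) (P : occupation) (a : C) (s s' : nat -> spin) :
  (forall (m : 'I_M) x, s' m.+1 x = if m == i then - s m.+1 x else s m.+1 x) ->
  prod_state P a s + prod_state P a s' = 0.
Proof.
move=> s's; apply/ffunP => z; rewrite !ffunE; case: eqP => _; last by rewrite addr0.
rewrite !(prod_spinD1 i) s's eqxx.
under [in X in _ + X]eq_bigr => m mi do rewrite s's (negbTE mi).
ring.
Qed.

Lemma xi_prod_state (f : seq nat) (s : nat -> spin) :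
  sorted ltn f -> all (fun m => 0 < m <= M)%N f ->
  xi M f s = prod_state (occ f) ((-1) ^+ 'C(size f, 2)) s.
Proof.
elim/last_ind: f => [_ _ | f m IH].
  have -> : occ [::] = [ffun => false] by apply/ffunP => k; rewrite !ffunE.
  by apply/ffunP => y; rewrite !ffunE mul1r.
rewrite -cats1 sorted_ltn_cat_cons cats0 all_cat /= andbT.
move=> /andP[f_lt f_sorted] /andP[f_range /andP[m_gt0 m_le]].
have m_lt : (m.-1 < M)%N by rewrite prednK.
have [i mE] : exists i : 'I_M, m = i.+1 by exists (Ordinal m_lt); rewrite prednK.
subst m.
rewrite /xi cats1 foldl_rcons -/(xi M f s) IH // cdag_prod_state; last first.
  by rewrite ffunE; apply/negP => /(allP f_lt); rewrite ltnn.
rewrite occ_rcons jw_occ ?(sorted_uniq ltn_trans ltnn) //.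
by rewrite size_rcons binS bin1 exprD mulrC.
Qed.

End ProductStates.

Arguments occ {M} f.

Section Hopping.
Variables (C : numClosedFieldType) (M : nat) (gam J : nat -> C).
Local Notation spin := {ffun bool -> C}.
Local Notation occupation := {ffun 'I_M -> bool}.

Lemma hR_prod_state (i j : 'I_M) (P0 : occupation) (a : C) (s : nat -> spin) :
  j = i.+1 :> nat -> ~~ P0 i -> ~~ P0 j ->
  hR M gam J i.+1 (prod_state (upd true i P0) a s) =
  prod_state (upd true j P0) (jw C P0 j * jw C P0 i * a)
    (set_spin s j.+1 [ffun x => - gam i.+1 * s j.+1 x + J i.+1 * spin_raise (s j.+1) x]).
Proof.
move=> ej P0i P0j; rewrite /hR.
have -> : (i.+1 == M) = false by rewrite -ej ltn_eqF.
have -> : i.+2 = j.+1 by rewrite ej.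
by rewrite sigp_prod_state !hop_prod_state // prod_state_comb.
Qed.

Lemma hL_prod_state (j k : 'I_M) (P0 : occupation) (a : C) (s : nat -> spin) :
  k = j.+1 :> nat -> ~~ P0 j -> ~~ P0 k ->
  hL M gam J k.+1 (prod_state (upd true k P0) a s) =
  prod_state (upd true j P0) (jw C P0 j * jw C P0 k * a)
    (set_spin s k.+1 [ffun x => - gam k * s k.+1 x + J k * spin_lower (s k.+1) x]).
Proof.
move=> ek P0j P0k; rewrite /hL /= [X in cdag X]ek.
have -> : (k.+1 == 1)%N = false by rewrite ek.
by rewrite sigm_prod_state !hop_prod_state // prod_state_comb.
Qed.

Lemma hop_pair_cancel (i j k : 'I_M) (P0 : occupation) (a : C) (s : nat -> spin) (b : spin) :
  j = i.+1 :> nat -> k = j.+1 :> nat -> ~~ P0 i -> ~~ P0 j -> ~~ P0 k ->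
  (forall z, gam k * b z - J k * spin_lower b z = s k.+1 z) ->
  hR M gam J i.+1 (prod_state (upd true i P0) a s)
  + hL M gam J k.+1 (prod_state (upd true k P0) a
      (set_spin (set_spin s k.+1 b) j.+1
         [ffun x => - gam i.+1 * s j.+1 x + J i.+1 * spin_raise (s j.+1) x])) = 0.
Proof.
move=> ej ek P0i P0j P0k bE.
have jw_ki : jw C P0 k = jw C P0 i.
  apply: jw_between => [|m /andP[im mk]]; first lia.
  have [->|mi] := eqVneq m i; first done.
  suff -> : m = j by [].
  have mi' : (m != i :> nat) := mi.
  by apply: val_inj; rewrite /= ej; lia.
rewrite (hR_prod_state (j := j)) // (hL_prod_state (j := j)) // jw_ki.
apply: (prod_state_opp (i := k)) => m x; rewrite /set_spin.
have kj : (k.+1 == j.+1) = false by apply/negbTE; rewrite ek; lia.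
case: (eqVneq m k) => [-> | mk].
  by rewrite eqxx kj ffunE -bE; ring.
by rewrite ifN //; case: ifP => // _; rewrite ifN.
Qed.

Lemma xi_hop_pair_cancel (i j k : 'I_M) (s1 s2 : seq nat) (s : nat -> spin) (b : spin) :
  j = i.+1 :> nat -> k = j.+1 :> nat ->
  sorted ltn (s1 ++ i.+1 :: s2) -> all (fun m => 0 < m <= M)%N (s1 ++ i.+1 :: s2) ->
  j.+1 \notin s1 ++ i.+1 :: s2 -> k.+1 \notin s1 ++ i.+1 :: s2 ->
  (forall z, gam k * b z - J k * spin_lower b z = s k.+1 z) ->
  hR M gam J i.+1 (xi M (s1 ++ i.+1 :: s2) s)
  + hL M gam J k.+1 (xi M (s1 ++ k.+1 :: s2)
      (set_spin (set_spin s k.+1 b) j.+1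
         [ffun x => - gam i.+1 * s j.+1 x + J i.+1 * spin_raise (s j.+1) x])) = 0.
Proof.
move=> ej ek sorted_occ range_occ j_notin k_notin bE.
have sub_occ : {subset s1 ++ s2 <= s1 ++ i.+1 :: s2}.
  by move=> x; rewrite !mem_cat in_cons => /orP[] ->; rewrite ?orbT.
have /and3P[lt_s1 gt_s2 _] : [&& all (ltn^~ i.+1) s1, all (ltn i.+1) s2 & sorted ltn (s1 ++ s2)].
  by rewrite -sorted_ltn_cat_cons.
have i_notin : i.+1 \notin s1 ++ s2.
  by rewrite mem_cat; apply/norP; split; apply/negP;
    [move/(allP lt_s1) | move/(allP gt_s2)]; rewrite /= ltnn.
have notin_s2 x : x \notin s1 ++ i.+1 :: s2 -> x \notin s2.
  by apply: contra => xs2; rewrite mem_cat in_cons xs2 !orbT.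
have sorted_moved : sorted ltn (s1 ++ k.+1 :: s2).
  rewrite ek ej; apply: sorted_ltn_shift2 sorted_occ _ _; apply: notin_s2.
    by move: j_notin; rewrite ej.
  by move: k_notin; rewrite ek ej.
have range_moved : all (fun m => 0 < m <= M)%N (s1 ++ k.+1 :: s2).
  by move: range_occ; rewrite !all_cat /= !ltn_ord.
rewrite !xi_prod_state // !size_cat /= !occ_cat_cons.
by apply: hop_pair_cancel; rewrite // ?ffunE //; apply: contra (sub_occ _) _.
Qed.

End Hopping.

Theorem lemma1 (C : numClosedFieldType) (M Q : nat) (gam J : nat -> C)
  (s : nat -> {ffun bool -> C}) (f : seq nat) (q fq : nat) :
  (forall m, gam m \is Num.real) -> (forall m, J m \is Num.real) ->
  (forall m, (0 < m < M)%N -> gam m != 0) ->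
  (1 <= Q <= M - 2)%N ->
  size f = Q -> sorted ltn f -> all (fun m => 0 < m <= M)%N f ->
  (forall m, (0 < m <= M)%N -> s m != 0) ->
  (1 <= q <= Q)%N -> fq = nth 0%N f q.-1 -> (fq <= M - 2)%N ->
  fq.+1 \notin f -> fq.+2 \notin f ->
  exists a b : {ffun bool -> C}, a != 0 /\ b != 0 /\
    hR M gam J fq (xi M f s)
    + hL M gam J fq.+2
        (xi M (set_nth 0%N f q.-1 fq.+2)
           (fun m => if m == fq.+1 then a else if m == fq.+2 then b else s m))
    = 0.
Proof.
move=> _ _ gam_neq0 _ size_f sorted_f f_range s_neq0 /andP[q_gt0 q_le] fqE fq_le fq1 fq2.
have q_lt : (q.-1 < size f)%N by rewrite size_f prednK.
have [s1 [s2 [fE ->]]] := split_at_nth 0%N fq.+2 q_lt.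
rewrite -fqE in fE; rewrite {f size_f fqE q_lt}fE in sorted_f f_range fq1 fq2 *.
have /andP[fq_gt0 _] : (0 < fq <= M)%N by apply: (allP f_range); rewrite mem_cat mem_head orbT.
have fq_lt : (fq.-1 < M)%N by lia.
have [i fqE] : exists i : 'I_M, fq = i.+1 by exists (Ordinal fq_lt); rewrite prednK.
subst fq.
have j_lt : (i.+1 < M)%N by lia.
have k_lt : (i.+2 < M)%N by lia.
have gam_k : gam i.+2 != 0 by apply: gam_neq0; lia.
have s_k : s i.+3 != 0 by apply: s_neq0; lia.
have [b b_neq0 bE] := spin_lower_solve (J i.+2) gam_k s_k.
exists [ffun x => - gam i.+1 * s i.+2 x + J i.+1 * spin_raise (s i.+2) x], b.
split; [|split=> //].
  by apply: spin_raise_comb_neq0; rewrite ?oppr_eq0; [apply: gam_neq0 | apply: s_neq0]; lia.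
exact: (xi_hop_pair_cancel (j := Ordinal j_lt) (k := Ordinal k_lt)).
Qed.
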